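(* Let $X=(X_n)_{n\in\mathbb{Z}}$ be a stationary sequence of integer-valued random variables and, for $n\in\mathbb{Z}$, let $\mathbb{Z}^R_X(n)$ be the connected component of $n$ in the record graph of $X$. Then $$\mathbb{P}[\mathbb{Z}^R_X(0)\text{ is finite}]=\mathbb{P}[\mathbb{Z}^R_X(n)\text{ is finite for all } n\ge1]=\mathbb{P}[\mathbb{Z}^R_X(n)\text{ is finite for all }n\le-1].$$
   Context: For a sequence $x=(x_n)_{n\in\mathbb{Z}}$, the record map is $R_x(i)=\inf\{n>i: \sum_{l=i}^{n-1}x_l\ge0\}$ if this set is nonempty, and $R_x(i)=i$ otherwise. The record graph has vertex set $\mathbb{Z}$ and a directed edge $i\to R_x(i)$ whenever $R_x(i)\ne i$; components are in the undirected sense. *)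

From HB Require Import structures.
From mathcomp Require Import all_boot all_order all_algebra.
From mathcomp Require Import all_classical all_reals.
From mathcomp Require Import measure probability.
From Stdlib Require Import Relations.
Set Implicit Arguments. Unset Strict Implicit. Unset Printing Implicit Defensive.
Import Order.TTheory GRing.Theory Num.Theory.
Local Open Scope ring_scope.
Local Open Scope classical_set_scope.

Definition psum (x : int -> int) (i : int) (k : nat) : int :=
  \sum_(0 <= l < k) x (i + l%:Z).

(* R_x(i) = inf { n > i : sum_{l=i}^{n-1} x_l >= 0 } if nonempty, else i.
   Writing n = i + k with k >= 1. *)
Definition record_map (x : int -> int) (i : int) : int :=
  match pselect (exists k : nat, `[< (0 < k)%N /\ 0 <= psum x i k >]) with
  | left h => i + (ex_minn h)%:Z
  | right _ => i
  end.

Definition record_edge (x : int -> int) (i j : int) : Prop :=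
  record_map x i = j /\ j <> i.

Definition record_component (x : int -> int) (n : int) : set int :=
  [set m | clos_refl_sym_trans int (record_edge x) n m].

(* stationarity of an integer-valued process: all finite-dimensional
   distributions are invariant under the shift by one *)
Definition stationary d (T : measurableType d) (R : realType)
  (P : probability T R) (X : int -> T -> int) : Prop :=
  forall s : seq (int * int),
    P [set w | forall p, p \in s -> X (p.1 + 1) w = p.2]
    = P [set w | forall p, p \in s -> X p.1 w = p.2].

From HB Require Import structures.
From mathcomp Require Import all_boot all_order all_algebra.
From mathcomp Require Import all_classical all_reals.
From mathcomp Require Import ereal topology normedtype sequences measure probability.
From mathcomp Require Import zify.
From Stdlib Require Import Relations.
Set Implicit Arguments. Unset Strict Implicit. Unset Printing Implicit Defensive.
Import Order.TTheory GRing.Theory Num.Theory.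
Local Open Scope ring_scope.
Local Open Scope classical_set_scope.

(* For a path x, the weak record times of the walk started at i (the k for which
   the partial sum of length k is maximal among those of length <= k) are
   exactly the iterates of R_x from i.  Two points are connected iff their
   forward orbits meet, and the orbit of any j in (i, R_x(i)] lands on R_x(i).
   Hence the component of n is unbounded above iff the walk from n has weak
   records arbitrarily far out (event U_n), and unbounded below iff walks
   started arbitrarily far to the left of n have weak records beyond n (event
   L_n).  U_n increases and L_n decreases with n, and by stationarity their
   probabilities do not depend on n, so both are a.s. constant in n; hence so
   is the event that the component of n is finite, which is the complement of
   U_n \/ L_n.  Measurability and the use of stationarity come from writing U_n
   and L_n as monotone limits of events depending on finitely many
   coordinates. *)

(** * The record graph of a fixed path *)

Lemma finite_int_bounded (A : set int) :
  finite_set A <-> exists a b, forall m, A m -> a <= m <= b.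
Proof.
split=> [/finite_seqP[s ->]|[a [b Aab]]].
- elim: s => [|y s [a [b IH]]]; first by exists 0, 0.
  exists (Num.min a y), (Num.max b y) => m /=; rewrite inE => /orP[/eqP->|ms].
    by rewrite ge_min le_max !lexx !orbT.
  by have /andP[am mb] := IH m ms; rewrite ge_min le_max am mb.
- apply: (@sub_finite_set _ _ ((fun i : nat => a + i%:Z) @` `I_(`|b - a|.+1))).
    move=> m Am; have /andP[am mb] := Aab m Am.
    by exists `|m - a|%N; rewrite /= ?ltnS; lia.
  exact/finite_image/finite_II.
Qed.

Section RecordGraph.
Variable x : int -> int.
Local Notation R := (record_map x).
Local Notation connected := (clos_refl_sym_trans int (record_edge x)).

Lemma psum0 i : psum x i 0 = 0.
Proof. by rewrite /psum big_geq. Qed.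

Lemma psumD i j k : psum x i (j + k) = psum x i j + psum x (i + j%:Z) k.
Proof.
rewrite /psum (big_cat_nat (n := j)) ?leq_addr //=; congr (_ + _).
rewrite -{1}(add0n j) big_addn addKn; apply: eq_bigr => l _.
by rewrite PoszD addrA addrAC.
Qed.

Variant record_map_spec i : int -> Prop :=
| RecordNone of (forall k, (0 < k)%N -> psum x i k < 0) : record_map_spec i i
| RecordAt k of (0 < k)%N & 0 <= psum x i k
    & (forall j, (0 < j < k)%N -> psum x i j < 0) : record_map_spec i (i + k%:Z).

Lemma record_mapP i : record_map_spec i (R i).
Proof.
rewrite /record_map; case: pselect => [h|h].
  case: ex_minnP => k /asboolP [k0 pk] kmin; apply: RecordAt => // j /andP[j0 jk].
  by rewrite ltNge; apply/negP => pj; have := kmin j (asboolT (conj j0 pj)); lia.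
apply: RecordNone => k k0; rewrite ltNge; apply/negP => pk.
by apply: h; exists k; apply/asboolP.
Qed.

Lemma record_map_ge i : i <= R i.
Proof. by case: record_mapP => // k *; rewrite lerDl. Qed.

Lemma record_map_le i k : (0 < k)%N -> 0 <= psum x i k ->
  exists2 k0, R i = i + k0%:Z & (0 < k0 <= k)%N.
Proof.
move=> k0 pk; case: record_mapP => [neg|k1 k10 _ neg]; first by have := neg k k0; lia.
exists k1 => //; rewrite k10 /= leqNgt; apply/negP => kk1.
by have := neg k; rewrite k0 kk1 => /(_ isT); lia.
Qed.

Definition weak_record i k := forall j, (j <= k)%N -> psum x i j <= psum x i k.

Lemma iter_weak_record q i : exists2 k, iter q R i = i + k%:Z & weak_record i k.
Proof.
elim: q => [|q [k Ek wk]].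
  by exists 0%N; [rewrite addr0 | move=> j; rewrite leqn0 => /eqP->].
rewrite iterS Ek; case: record_mapP => [_|k1 k10 pk1 neg]; first by exists k.
exists (k + k1)%N; first by rewrite PoszD addrA.
move=> j jk; rewrite psumD; case: (leqP j k) => [jk'|kj].
  by apply: le_trans (wk j jk') _; rewrite lerDl.
have -> : j = (k + (j - k))%N by lia.
rewrite psumD lerD2l; case: (ltnP (j - k) k1) => jk1.
  by apply/ltW/lt_le_trans/pk1/neg; lia.
by have -> : (j - k = k1)%N by lia.
Qed.

Lemma weak_record_iter k i : weak_record i k -> exists q, iter q R i = i + k%:Z.
Proof.
elim/ltn_ind: k i => k IH i wk.
have [->|k0] := posnP k; first by exists 0%N; rewrite addr0.
have [k1 Ri /andP[k10 k1k]] : exists2 k1, R i = i + k1%:Z & (0 < k1 <= k)%N.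
  by apply: record_map_le => //; have := wk 0%N isT; rewrite psum0.
have [e|ne] := eqVneq k1 k; first by exists 1%N; rewrite /= Ri e.
have wk1 : weak_record (i + k1%:Z) (k - k1).
  have Ek : psum x i k = psum x i k1 + psum x (i + k1%:Z) (k - k1).
    by rewrite -psumD subnKC.
  by move=> j jk; have := wk (k1 + j)%N; rewrite psumD Ek lerD2l; apply; lia.
have [|q Hq] := IH (k - k1)%N _ _ wk1; first by lia.
by exists q.+1; rewrite iterSr Ri Hq -addrA -PoszD subnKC.
Qed.

Lemma iter_connected q i : connected i (iter q R i).
Proof.
elim: q => [|q IH]; first exact: rst_refl.
rewrite iterS; apply: rst_trans IH _.
have [->|ne] := eqVneq (R (iter q R i)) (iter q R i); first exact: rst_refl.
by apply: rst_step; split => //; apply/eqP.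
Qed.

Lemma iter_record_map_ge q i : i <= iter q R i.
Proof. by elim: q => //= q IH; apply: le_trans IH (record_map_ge _). Qed.

Lemma record_map_nested i j : i < j < R i -> j < R j <= R i.
Proof.
case: record_mapP => [_|k _ pk neg] /andP[ij jR]; first by lia.
have [t Ej] : exists t : nat, j = i + t%:Z by exists `|j - i|%N; lia.
have t0k : (0 < t < k)%N by lia.
have pj : 0 <= psum x j (k - t).
  rewrite Ej; have := neg t t0k; have := psumD i t (k - t).
  by rewrite subnKC; lia.
have [|k1 -> k1k] := record_map_le _ pj; lia.
Qed.

Lemma iter_record_map_nested i j : i < j <= R i -> exists q, iter q R j = R i.
Proof.
move En : `|R i - j|%N => n; elim/ltn_ind: n j En => n IH j En /andP[ij jR].
have [->|ne] := eqVneq j (R i); first by exists 0%N.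
have /andP[jRj RjR] : j < R j <= R i by apply: record_map_nested; lia.
have [||q Hq] := IH `|R i - R j|%N _ (R j) erefl; [lia | lia |].
by exists q.+1; rewrite iterSr.
Qed.

Lemma connected_between p a b : a <= b <= iter p R a -> connected a b.
Proof.
elim: p a b => [|p IH] a b /andP[ab bp].
  have -> : b = a by apply/le_anti; rewrite bp ab.
  exact: rst_refl.
rewrite iterSr in bp; have aRa : connected a (R a) := iter_connected 1 a.
have [Rb|bR] := leP (R a) b; first by apply: rst_trans aRa (IH _ _ _); rewrite Rb.
have [<-|ne] := eqVneq a b; first exact: rst_refl.
have [|q Hq] := @iter_record_map_nested a b.
  by rewrite (ltW bR) andbT lt_neqAle ne ab.
by apply: rst_trans aRa _; apply: rst_sym; rewrite -Hq; apply: iter_connected.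
Qed.

Lemma connected_meet a b : connected a b -> exists p q, iter p R a = iter q R b.
Proof.
elim=> {a b} [a b [<- _]|a|a b _ [p [q E]]|a b c _ [p [q E1]] _ [r [s E2]]].
- by exists 1%N, 0%N.
- by exists 0%N, 0%N.
- by exists q, p.
- exists (r + p)%N, (q + s)%N.
  by rewrite iterD E1 -iterD addnC iterD E2 -iterD.
Qed.

Definition unbounded_right n :=
  forall K : nat, exists2 k, (K <= k)%N & weak_record n k.

Definition unbounded_left n := forall M : nat,
  exists M' k : nat, [/\ (M <= M')%N, (M' <= k)%N & weak_record (n - M'%:Z) k].

Lemma unbounded_rightP n :
  (forall K, exists2 m, K <= m & record_component x n m) <-> unbounded_right n.
Proof.
split=> [nK K|nK K].
- have [m Km /connected_meet[p [q E]]] := nK (n + K%:Z).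
  have [k Ek wk] := iter_weak_record p n; exists k => //.
  by have := iter_record_map_ge q m; rewrite -E Ek; lia.
- have [k Kk /weak_record_iter[q Eq]] := nK `|K - n|%N.
  by exists (n + k%:Z); [lia | rewrite -Eq; apply: iter_connected].
Qed.

Lemma unbounded_leftP n :
  (forall K, exists2 m, m <= K & record_component x n m) <-> unbounded_left n.
Proof.
split=> [nK M|nK K].
- have [m mM /connected_meet[p [q E]]] := nK (n - M%:Z).
  have [k Ek wk] := iter_weak_record q m.
  have := iter_record_map_ge p n; rewrite E Ek => nmk.
  exists `|n - m|%N, k; split; [lia | lia |].
  by have -> : n - `|n - m|%N%:Z = m by lia.
- have [M' [k [KM' M'k /weak_record_iter[q Eq]]]] := nK `|n - K|%N.
  exists (n - M'%:Z); first by lia.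
  by apply/rst_sym/(@connected_between q); rewrite Eq; lia.
Qed.

Lemma finite_componentP n :
  finite_set (record_component x n) <-> ~ unbounded_right n /\ ~ unbounded_left n.
Proof.
rewrite finite_int_bounded; split=> [[a [b Cab]]|[nR nL]].
- split=> [/unbounded_rightP nR | /unbounded_leftP nL].
    by have [m bm /Cab] := nR (b + 1); lia.
  by have [m ma /Cab] := nL (a - 1); lia.
- have [b Hb] : exists b, ~ exists2 m, b <= m & record_component x n m.
    by apply/existsNP => H; apply/nR/unbounded_rightP.
  have [a Ha] : exists a, ~ exists2 m, m <= a & record_component x n m.
    by apply/existsNP => H; apply/nL/unbounded_leftP.
  exists a, b => m Cm; apply/andP; split; rewrite leNgt; apply/negP => h.
    by apply: Ha; exists m => //; lia.
  by apply: Hb; exists m => //; lia.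
Qed.

End RecordGraph.

Definition shift (x : int -> int) : int -> int := fun l => x (l + 1).

Lemma psum_shift x i k : psum (shift x) i k = psum x (i + 1) k.
Proof. by apply: eq_bigr => l _; rewrite /shift addrAC. Qed.

Lemma weak_record_shift x i k :
  weak_record (shift x) i k <-> weak_record x (i + 1) k.
Proof. by split=> wk j jk; have := wk j jk; rewrite !psum_shift. Qed.

Lemma unbounded_right_shift x n :
  unbounded_right (shift x) n <-> unbounded_right x (n + 1).
Proof.
split=> nR K; have [k Kk wk] := nR K; exists k => //.
  exact: (iffLR (weak_record_shift _ _ _)).
exact: (iffRL (weak_record_shift _ _ _)).
Qed.

Lemma unbounded_left_shift x n :
  unbounded_left (shift x) n <-> unbounded_left x (n + 1).
Proof.
split=> nL M; have [M' [k [MM' M'k wk]]] := nL M; exists M', k; split => //.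
  by move: wk => /weak_record_shift; rewrite addrAC.
by apply: (iffRL (weak_record_shift _ _ _)); rewrite addrAC.
Qed.

Lemma unbounded_right_succ x n : unbounded_right x n -> unbounded_right x (n + 1).
Proof.
move=> nR K; have [[|k] Kk wk] := nR K.+1; first by [].
exists k => // j jk; have := wk j.+1 jk.
by rewrite -[j.+1]add1n -[k.+1]add1n !psumD lerD2l.
Qed.

Lemma unbounded_left_pred x n : unbounded_left x (n + 1) -> unbounded_left x n.
Proof.
move=> nL M; have [M' [k [MM' M'k wk]]] := nL M.+1; exists M'.-1, k.
by split; [lia | lia | have -> : n - M'.-1%:Z = n + 1 - M'%:Z by lia].
Qed.

Lemma weak_record_window x y i L k :
  (forall l, (l < L)%N -> x (i + l%:Z) = y (i + l%:Z)) -> (k <= L)%N ->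
  weak_record x i k -> weak_record y i k.
Proof.
move=> xy kL wk j jk.
have psum_xy m : (m <= L)%N -> psum x i m = psum y i m.
  by move=> mL; apply: eq_big_nat => l /andP[_ lm]; rewrite xy //; lia.
by rewrite -!psum_xy //; [apply: wk | lia].
Qed.

(** * Path events with the same law *)

Definition sample_path (T : Type) (Z : int -> T -> int) (w : T) : int -> int :=
  fun l => Z l w.

Definition cylinder (T : Type) (Z : int -> T -> int) (s : seq (int * int)) : set T :=
  [set w | forall p, p \in s -> Z p.1 w = p.2].

Lemma measurable_cylinder d (T : measurableType d) (Z : int -> T -> int) s :
  (forall n k, measurable (Z n @^-1` [set k])) -> measurable (cylinder Z s).
Proof.
move=> mZ; elim: s => [|p s IH].
  by rewrite [cylinder _ _](_ : _ = setT) //; apply/seteqP; split.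
rewrite [cylinder _ _](_ : _ = Z p.1 @^-1` [set p.2] `&` cylinder Z s).
  exact: measurableI.
apply/seteqP; split=> w /=.
  by move=> h; split=> [|q qs]; apply: h; rewrite inE ?eqxx ?qs ?orbT.
by move=> [h1 h2] q; rewrite inE => /orP[/eqP->|/h2].
Qed.

Section SameLaw.
Variables (d : measure_display) (T : measurableType d) (R : realType).
Variables (P : {finite_measure set T -> \bar R}) (X Y : int -> T -> int).
Hypothesis mX : forall n k, measurable (X n @^-1` [set k]).
Hypothesis mY : forall n k, measurable (Y n @^-1` [set k]).
Hypothesis XY : forall s, P (cylinder X s) = P (cylinder Y s).

Definition same_law (A : set (int -> int)) := [/\
  measurable (sample_path X @^-1` A), measurable (sample_path Y @^-1` A) &
  P (sample_path X @^-1` A) = P (sample_path Y @^-1` A)].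

Section Window.
Variables (a : int) (K : nat) (A : set (int -> int)).
Hypothesis A_window : forall x y,
  (forall i, (i < K)%N -> x (a + i%:Z) = y (a + i%:Z)) -> A x -> A y.

Let values (x : int -> int) := mkseq (fun i => x (a + i%:Z)) K.
Let window (s : seq int) := mkseq (fun i => (a + i%:Z, nth 0 s i)) K.
Let extend (s : seq int) : int -> int := fun l => nth 0 s `|l - a|%N.

(* The event is the disjoint union over [n] of the slices of paths whose values
   on the window have code [n]; each slice is empty or a cylinder ([sliceE]). *)
Let code n := if pickle_inv n is Some s then
  if `[< A (extend s) >] && (size s == K) then Some (window s) else None else None.

Let slice (Z : int -> T -> int) n :=
  [set w | A (sample_path Z w) /\ pickle (values (sample_path Z w)) = n].

Let extend_values (x : int -> int) i :
  (i < K)%N -> extend (values x) (a + i%:Z) = x (a + i%:Z).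
Proof. by move=> iK; rewrite /extend addrAC subrr add0r absz_nat nth_mkseq. Qed.

Let cylinder_window (Z : int -> T -> int) s w : size s = K ->
  cylinder Z (window s) w <-> values (sample_path Z w) = s.
Proof.
move=> sK; split=> [h|<- p /mapP[i]]; last first.
  by rewrite mem_iota add0n => /andP[_ iK] ->; rewrite /= nth_mkseq.
apply: (@eq_from_nth _ 0); rewrite size_mkseq // => i iK.
rewrite nth_mkseq //; apply: (h (a + i%:Z, nth 0 s i)).
by apply/mapP; exists i; rewrite // mem_iota add0n.
Qed.

Let sliceE (Z : int -> T -> int) n : slice Z n = oapp (cylinder Z) set0 (code n).
Proof.
apply/seteqP; split=> w.
  move=> [Aw <-]; rewrite /code pickleK_inv size_mkseq eqxx andbT.
  have -> : `[< A (extend (values (sample_path Z w))) >].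
    by apply/asboolP; apply: A_window Aw => i iK; rewrite extend_values.
  by apply/cylinder_window; rewrite ?size_mkseq.
rewrite /code; case En : (pickle_inv n) => [s|] //.
case: ifP => // /andP[/asboolP As /eqP sK] /= /(@cylinder_window Z s w sK) Es.
split; last by rewrite Es; have := @pickle_invK (seq int) n; rewrite En.
by apply: A_window As => i iK; rewrite -Es extend_values.
Qed.

Let measurable_slice (Z : int -> T -> int) :
  (forall n k, measurable (Z n @^-1` [set k])) -> forall n, measurable (slice Z n).
Proof.
move=> mZ n; rewrite sliceE; case: code => /= [s|]; last exact: measurable0.
exact: measurable_cylinder.
Qed.

Let bigcup_slice (Z : int -> T -> int) : sample_path Z @^-1` A = \bigcup_n slice Z n.
Proof.
apply/seteqP; split=> [w Aw|w [n _ []//]].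
by exists (pickle (values (sample_path Z w))).
Qed.

Let trivIset_slice (Z : int -> T -> int) : trivIset setT (slice Z).
Proof. by move=> n m _ _ [w [[_ <-] [_ <-]]]. Qed.

Lemma same_law_window : same_law A.
Proof.
split; rewrite ?bigcup_slice; try by apply: bigcupT_measurable; apply: measurable_slice.
rewrite !measure_bigcup //; do ?by move=> n _; apply: measurable_slice.
by apply: eq_eseriesr => n _; rewrite !sliceE; case: code => //= s; apply: XY.
Qed.

End Window.

Let eq_lim_measure (F G : nat -> set T) (A B : set T) :
  (forall k, P (F k) = P (G k)) ->
  (P \o F) @ \oo --> P A -> (P \o G) @ \oo --> P B -> P A = P B.
Proof.
move=> FG; rewrite (_ : P \o F = P \o G); last exact/funext.
by move=> cA cB; apply: (cvg_unique (@ereal_hausdorff R) cA cB).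
Qed.

Lemma same_law_bigcup (F : nat -> set (int -> int)) :
  (forall k, same_law (F k)) -> (forall k, F k `<=` F k.+1) ->
  same_law (\bigcup_k F k).
Proof.
move=> sF incF; rewrite /same_law !preimage_bigcup.
have [mXF mYF PXY] := all_and3 sF.
have mono (Z : int -> T -> int) : nondecreasing_seq (fun k => sample_path Z @^-1` F k).
  by apply/nondecreasing_seqP => k; rewrite subsetEset => w /incF.
have mbX := bigcupT_measurable _ mXF; have mbY := bigcupT_measurable _ mYF.
split=> //; apply: (eq_lim_measure PXY); exact: nondecreasing_cvg_mu.
Qed.

Lemma same_law_bigcap (F : nat -> set (int -> int)) :
  (forall k, same_law (F k)) -> (forall k, F k.+1 `<=` F k) ->
  same_law (\bigcap_k F k).
Proof.
move=> sF decF; rewrite /same_law !preimage_bigcap.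
have [mXF mYF PXY] := all_and3 sF.
have mono (Z : int -> T -> int) : nonincreasing_seq (fun k => sample_path Z @^-1` F k).
  by apply/nonincreasing_seqP => k; rewrite subsetEset => w /decF.
have mbX := bigcapT_measurable mXF; have mbY := bigcapT_measurable mYF.
have finP (A : set T) : measurable A -> (P A < +oo)%E.
  by move=> mA; rewrite ltey_eq fin_num_measure.
split=> //; apply: (eq_lim_measure PXY); apply: nonincreasing_cvg_mu => //;
  exact: finP.
Qed.

Lemma same_law_unbounded_right n : same_law [set x | unbounded_right x n].
Proof.
have -> : [set x | unbounded_right x n] = \bigcap_K \bigcup_L
    [set x | exists2 k, (K <= k <= L)%N & weak_record x n k].
  apply/seteqP; split=> [x nR K _|x nR K].
    by have [k Kk wk] := nR K; exists k => //; exists k; rewrite ?Kk ?leqnn.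
  by have [L _ [k /andP[Kk _] wk]] := nR K I; exists k.
apply: same_law_bigcap => [K|K x [L _ [k /andP[Kk kL] wk]]]; last first.
  by exists L => //; exists k; rewrite ?kL ?(ltnW Kk).
apply: same_law_bigcup => [L|L x [k /andP[Kk kL] wk]]; last first.
  by exists k; rewrite ?Kk ?(leqW kL).
apply: (@same_law_window n L) => x y xy [k /andP[Kk kL] wk].
by exists k; rewrite ?Kk //; apply: weak_record_window xy kL wk.
Qed.

Lemma same_law_unbounded_left n : same_law [set x | unbounded_left x n].
Proof.
have -> : [set x | unbounded_left x n] = \bigcap_M \bigcup_L [set x |
    exists M' k : nat,
      [/\ (M <= M')%N, (M' <= k <= L)%N & weak_record x (n - M'%:Z) k]].
  apply/seteqP; split=> [x nL M _|x nL M].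
    have [M' [k [MM' M'k wk]]] := nL M.
    by exists k => //; exists M', k; rewrite M'k leqnn.
  by have [L _ [M' [k [MM' /andP[M'k _] wk]]]] := nL M I; exists M', k.
apply: same_law_bigcap => [M|M x [L _ [M' [k [MM' M'kL wk]]]]]; last first.
  by exists L => //; exists M', k; split=> //; apply: ltnW.
apply: same_law_bigcup => [L|L x [M' [k [MM' /andP[M'k kL] wk]]]]; last first.
  by exists M', k; rewrite M'k (leqW kL).
apply: (@same_law_window (n - L%:Z) (L + L)) => x y xy [M' [k [MM' /andP[M'k kL] wk]]].
exists M', k; split; rewrite ?M'k //.
apply: (weak_record_window (L := k)) wk => // l lk.
have -> : n - M'%:Z + l%:Z = n - L%:Z + (L - M' + l)%N%:Z by lia.
by apply: xy; lia.
Qed.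

End SameLaw.

(** * Monotone events of constant measure *)

Lemma measure_eq_negligible_setD d (T : measurableType d) (R : realType)
    (mu : {measure set T -> \bar R}) (A B : set T) :
  measurable A -> measurable B ->
  mu.-negligible (A `\` B) -> mu.-negligible (B `\` A) -> mu A = mu B.
Proof.
move=> mA mB /negligibleP AB /negligibleP BA.
rewrite (measureDI mu mA mB) (measureDI mu mB mA) setIC AB ?BA //;
  exact: measurableD.
Qed.

Lemma negligible_setD_eq_measure d (T : measurableType d) (R : realType)
    (mu : {finite_measure set T -> \bar R}) (A B : set T) :
  measurable A -> measurable B -> B `<=` A -> mu A = mu B ->
  mu.-negligible (A `\` B).
Proof.
move=> mA mB BA AB; apply/negligibleP; first exact: measurableD.
rewrite measureD ?ltey_eq ?fin_num_measure // (setIidr BA).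
by transitivity (mu B - mu B)%E; [congr (_ - _)%E | rewrite subee ?fin_num_measure].
Qed.

Definition nondecreasing_eq_measure d (T : measurableType d) (R : realType)
    (mu : {finite_measure set T -> \bar R}) (u : int -> set T) := [/\
  forall n, measurable (u n), forall n, u n `<=` u (n + 1) &
  forall n, mu (u n) = mu (u (n + 1))].

Definition nonincreasing_eq_measure d (T : measurableType d) (R : realType)
    (mu : {finite_measure set T -> \bar R}) (l : int -> set T) := [/\
  forall n, measurable (l n), forall n, l (n + 1) `<=` l n &
  forall n, mu (l n) = mu (l (n + 1))].

Section MonotoneEvents.
Variables (d : measure_display) (T : measurableType d) (R : realType).
Variable mu : {finite_measure set T -> \bar R}.

Lemma nonincreasing_eq_measure_opp (l : int -> set T) :
  nonincreasing_eq_measure mu l -> nondecreasing_eq_measure mu (fun n => l (- n)).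
Proof.
case=> meas_l l_decr l_const; split=> [n|n|n]; first exact: meas_l.
  by have := @l_decr (- (n + 1)); rewrite opprD subrK.
by have := l_const (- (n + 1)); rewrite opprD subrK.
Qed.

Lemma nondecreasing_eq_measure_opp (u : int -> set T) :
  nondecreasing_eq_measure mu u -> nonincreasing_eq_measure mu (fun n => u (- n)).
Proof.
case=> meas_u u_incr u_const; split=> [n|n|n]; first exact: meas_u.
  by have := @u_incr (- (n + 1)); rewrite opprD subrK.
by have := u_const (- (n + 1)); rewrite opprD subrK.
Qed.

Variables (u l G : int -> set T).
Hypothesis incr_u : nondecreasing_eq_measure mu u.
Hypothesis decr_l : nonincreasing_eq_measure mu l.
Hypothesis G_iff : forall n w, G n w <-> ~ u n w /\ ~ l n w.

Lemma measure_at0_eq_all_pos : mu (G 0) = mu [set w | forall n, 1 <= n -> G n w].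
Proof.
have [meas_u u_incr u_const] := incr_u; have [meas_l l_decr l_const] := decr_l.
have mG n : measurable (G n).
  rewrite (_ : G n = ~` (u n `|` l n)); first exact/measurableC/measurableU.
  apply/seteqP; split=> [w /G_iff[nu nl] []//|w nul].
  by apply/G_iff; split=> h; apply: nul; [left | right].
have mB : measurable [set w | forall n, 1 <= n -> G n w].
  rewrite (_ : [set w | _] = \bigcap_j G j.+1%:Z); first exact: bigcapT_measurable.
  apply/seteqP; split=> [w Gw j _|w Gw n n1]; first exact: Gw.
  by have := Gw `|n|.-1 I; rewrite (_ : `|n|.-1.+1%:Z = n) //; lia.
have l_le0 (k : nat) : l k%:Z `<=` l 0.
  elim: k => [//|k IH]; apply: subset_trans IH.
  by rewrite -[k.+1]addn1 PoszD; apply: l_decr.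
(* The two events differ only inside [\bigcup_j (u j.+1 `\` u j)] and
   [l 0 `\` l 1]. *)
apply: measure_eq_negligible_setD (mG 0) mB _ _.
- apply: (@negligibleS _ _ _ _ (\bigcup_j (u j.+1%:Z `\` u j%:Z))); last first.
    apply: negligible_bigcup => j; rewrite -[j.+1]addn1 PoszD.
    apply: negligible_setD_eq_measure (meas_u _) (meas_u _) (@u_incr j) _.
    exact: esym.
  move=> w [/G_iff[nu0 nl0] nB].
  have [n n1 /G_iff nGn] : exists2 n, 1 <= n & ~ G n w.
    apply: contrapT => h; apply: nB => n n1.
    by apply: contrapT => nG; apply: h; exists n.
  have [k Ek] : exists k : nat, n = k%:Z by exists `|n|%N; lia.
  have [ukw|nuk] := pselect (u k%:Z w); last first.
    by exfalso; apply: nGn; rewrite Ek; split=> // /l_le0.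
  elim: k {n n1 nGn Ek} ukw => [//|k IH] uk.
  by have [ukw|nuk] := pselect (u k%:Z w); [exact: IH | exists k].
- apply: (@negligibleS _ _ _ _ (l 0 `\` l (0 + 1))); last first.
    exact: negligible_setD_eq_measure (meas_l _) (meas_l _) (@l_decr 0) (l_const 0).
  move=> w [Gw /G_iff nG0]; have /G_iff[nu1 nl1] := Gw 1 (lexx _).
  split=> //; apply: contrapT => nl0; apply: nG0; split=> // u0.
  exact: nu1 (@u_incr 0 _ u0).
Qed.

End MonotoneEvents.

Lemma measure_at0_eq_all_neg d (T : measurableType d) (R : realType)
    (mu : {finite_measure set T -> \bar R}) (u l G : int -> set T) :
  nondecreasing_eq_measure mu u -> nonincreasing_eq_measure mu l ->
  (forall n w, G n w <-> ~ u n w /\ ~ l n w) ->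
  mu (G 0) = mu [set w | forall n, n <= -1 -> G n w].
Proof.
move=> incr_u decr_l G_iff.
rewrite (_ : [set w | _] = [set w | forall n, 1 <= n -> G (- n) w]).
  apply: (measure_at0_eq_all_pos (nonincreasing_eq_measure_opp decr_l)
    (nondecreasing_eq_measure_opp incr_u)) => n w.
  by rewrite G_iff; split=> -[].
apply/seteqP; split=> w Gw n n1; first by apply: Gw; rewrite lerNl.
by rewrite -[n]opprK; apply: Gw; rewrite lerNr.
Qed.

Section Stationary.
Variables (d : measure_display) (T : measurableType d) (R : realType).
Variables (P : probability T R) (X : int -> T -> int).
Hypothesis mX : forall n k, measurable (X n @^-1` [set k]).
Hypothesis X_stationary : stationary P X.

Let mXS : forall n k, measurable ((fun l => X (l + 1)) n @^-1` [set k]).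
Proof. by move=> n k; apply: mX. Qed.

Let measure_shift (A B : set (int -> int)) :
  same_law P (fun l => X (l + 1)) X A -> (forall x, A (shift x) <-> B x) ->
  P (sample_path X @^-1` A) = P (sample_path X @^-1` B).
Proof.
case=> _ _ <- AB; congr (P _); apply/seteqP.
by split=> w; [exact: (AB _).1 | exact: (AB (sample_path X w)).2].
Qed.

Lemma nondecreasing_eq_measure_unbounded_right :
  nondecreasing_eq_measure P (fun n => [set w | unbounded_right (sample_path X w) n]).
Proof.
have sl n := same_law_unbounded_right mXS mX X_stationary n.
split=> [n|n w|n]; first by case: (sl n).
  exact: unbounded_right_succ.
exact: measure_shift (sl n) (unbounded_right_shift ^~ n).
Qed.

Lemma nonincreasing_eq_measure_unbounded_left :
  nonincreasing_eq_measure P (fun n => [set w | unbounded_left (sample_path X w) n]).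
Proof.
have sl n := same_law_unbounded_left mXS mX X_stationary n.
split=> [n|n w|n]; first by case: (sl n).
  exact: unbounded_left_pred.
exact: measure_shift (sl n) (unbounded_left_shift ^~ n).
Qed.

End Stationary.

Theorem lemma3p3 (d : measure_display) (T : measurableType d) (R : realType)
  (P : probability T R) (X : int -> T -> int)
  (HX : forall (n k : int), measurable (X n @^-1` [set k]))
  (Hstat : stationary P X) :
  P [set w | finite_set (record_component (fun l => X l w) 0)]
    = P [set w | forall n : int, 1 <= n ->
                   finite_set (record_component (fun l => X l w) n)]
  /\
  P [set w | finite_set (record_component (fun l => X l w) 0)]
    = P [set w | forall n : int, n <= -1 ->
                   finite_set (record_component (fun l => X l w) n)].
Proof.
have incr := nondecreasing_eq_measure_unbounded_right HX Hstat.
have decr := nonincreasing_eq_measure_unbounded_left HX Hstat.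
have G_iff n w := finite_componentP (sample_path X w) n.
split; [exact: measure_at0_eq_all_pos incr decr G_iff |
        exact: measure_at0_eq_all_neg incr decr G_iff].
Qed.
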